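(* Identify each ququart basis state $|1\rangle,|2\rangle,|3\rangle,|4\rangle$ of $\mathbb{C}^4$ with the two-qubit states $|00\rangle,|01\rangle,|10\rangle,|11\rangle$ respectively. Let $$L=\begin{pmatrix}1&2&3&4\\2&1&4&3\\3&4&1&2\\4&3&2&1\end{pmatrix},\quad M=\begin{pmatrix}1&2&3&4\\3&4&1&2\\4&3&2&1\\2&1&4&3\end{pmatrix},$$ $P_{16}=\sum_{l,j=1}^4|L_{lj},M_{lj}\rangle\langle l,j|$ acting on $\mathbb{C}^4\otimes\mathbb{C}^4$, and $\Phi_A(\rho)=\mathrm{Tr}_2[P_{16}\rho P_{16}^\dagger]$ (partial trace over the second ququart). Write the first ququart as qubits $(q_1,q_2)$ and the second as $(q_3,q_4)$, let $|\Psi_\pm\rangle=(|00\rangle\pm|11\rangle)/\sqrt2$, $|\Xi_\pm\rangle=(|01\rangle\pm|10\rangle)/\sqrt2$, and write $|X\rangle\otimes|Y\rangle$ for the state with $|X\rangle$ on the first qubits $(q_1,q_3)$ of the two ququarts and $|Y\rangle$ on the second qubits $(q_2,q_4)$. Consider the orthonormal basis arranged in the $4\times4$ array Row 1: $|\Psi_+\rangle|\Psi_+\rangle,\ |\Psi_+\rangle|\Psi_-\rangle,\ |\Psi_-\rangle|\Psi_+\rangle,\ |\Psi_-\rangle|\Psi_-\rangle$; Row 2: $|\Psi_+\rangle|\Xi_+\rangle,\ |\Psi_+\rangle|\Xi_-\rangle,\ -|\Psi_-\rangle|\Xi_+\rangle,\ -|\Psi_-\rangle|\Xi_-\rangle$;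 Row 3: $|\Xi_+\rangle|\Psi_+\rangle,\ -|\Xi_+\rangle|\Psi_-\rangle,\ -|\Xi_-\rangle|\Psi_+\rangle,\ |\Xi_-\rangle|\Psi_-\rangle$; Row 4: $|\Xi_+\rangle|\Xi_+\rangle,\ -|\Xi_+\rangle|\Xi_-\rangle,\ |\Xi_-\rangle|\Xi_+\rangle,\ -|\Xi_-\rangle|\Xi_-\rangle$. Fix $m$ rows and $n$ columns of this array, and consider the two-ququart pure states $|\psi\rangle$ whose expansion in this basis uses only basis vectors lying in the chosen $m$ rows and $n$ columns. Then the maximal number of nonzero eigenvalues of $\Phi_A(|\psi\rangle\langle\psi|)$ over such states equals $\min(m,n)$. *)

From mathcomp Require Import all_boot all_order all_algebra all_field.
Set Implicit Arguments. Unset Strict Implicit. Unset Printing Implicit Defensive.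
Import Order.TTheory GRing.Theory Num.Theory.
Local Open Scope ring_scope.

Definition adjmx {m n : nat} (A : 'M[algC]_(m, n)) : 'M[algC]_(n, m) :=
  (map_mx Num.conj A)^T.

(* Two-ququart space C^4 (x) C^4 = C^16; ququart basis state |a+1> (a : 'I_4)
   tensor |b+1> is the basis vector number 4*a+b. *)
Definition idx (a b : 'I_4) : 'I_16 := inord (4 * a + b).
Definition ket (a b : 'I_4) : 'cV[algC]_16 := delta_mx (idx a b) 0.

(* Latin squares L and M, 0-indexed (entry value v stands for ket |v+1>). *)
Definition Lnat (l j : nat) : nat :=
  match l, j with
  | 0,0 => 0 | 0,1 => 1 | 0,2 => 2 | 0,3 => 3
  | 1,0 => 1 | 1,1 => 0 | 1,2 => 3 | 1,3 => 2
  | 2,0 => 2 | 2,1 => 3 | 2,2 => 0 | 2,3 => 1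
  | 3,0 => 3 | 3,1 => 2 | 3,2 => 1 | 3,3 => 0
  | _,_ => 0 end.
Definition Mnat (l j : nat) : nat :=
  match l, j with
  | 0,0 => 0 | 0,1 => 1 | 0,2 => 2 | 0,3 => 3
  | 1,0 => 2 | 1,1 => 3 | 1,2 => 0 | 1,3 => 1
  | 2,0 => 3 | 2,1 => 2 | 2,2 => 1 | 2,3 => 0
  | 3,0 => 1 | 3,1 => 0 | 3,2 => 3 | 3,3 => 2
  | _,_ => 0 end.
Definition Lsq (l j : 'I_4) : 'I_4 := inord (Lnat l j).
Definition Msq (l j : 'I_4) : 'I_4 := inord (Mnat l j).

Definition P16 : 'M[algC]_16 :=
  \sum_(l < 4) \sum_(j < 4) ket (Lsq l j) (Msq l j) *m adjmx (ket l j).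

Definition ptrace2 (X : 'M[algC]_16) : 'M[algC]_4 :=
  \matrix_(a < 4, a' < 4) \sum_(b < 4) X (idx a b) (idx a' b).

Definition PhiA (rho : 'M[algC]_16) : 'M[algC]_4 :=
  ptrace2 (P16 *m rho *m adjmx P16).

Definition proj (psi : 'cV[algC]_16) : 'M[algC]_16 := psi *m adjmx psi.

Definition num_nonzero_eigs {n : nat} (A : 'M[algC]_n) : nat :=
  (n - mup 0 (char_poly A))%N.

(* Two-qubit states: 'cV_4 with |x y> (x,y bits) being basis vector 2*x+y. *)
Definition qket (x y : nat) : 'I_4 := inord (2 * x + y).
Definition e4 (k : nat) : 'cV[algC]_4 := delta_mx (inord k) 0.
Definition isq2 : algC := (sqrtC 2)^-1.
Definition PsiP : 'cV[algC]_4 := isq2 *: (e4 0 + e4 3).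
Definition PsiM : 'cV[algC]_4 := isq2 *: (e4 0 - e4 3).
Definition XiP  : 'cV[algC]_4 := isq2 *: (e4 1 + e4 2).
Definition XiM  : 'cV[algC]_4 := isq2 *: (e4 1 - e4 2).

(* Ququart a = qubits (a./2, a %% 2): |1>=|00>, |2>=|01>, |3>=|10>, |4>=|11>.
   First ququart = (q1,q2), second = (q3,q4).
   tens X Y = |X> on (q1,q3) and |Y> on (q2,q4). *)
Definition tens (X Y : 'cV[algC]_4) : 'cV[algC]_16 :=
  \sum_(a < 4) \sum_(b < 4)
    (X (qket a./2 b./2) 0 * Y (qket (a %% 2) (b %% 2)) 0) *: ket a b.

Definition Bnat (r c : nat) : 'cV[algC]_16 :=
  match r, c with
  | 0,0 => tens PsiP PsiP | 0,1 => tens PsiP PsiM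
  | 0,2 => tens PsiM PsiP | 0,3 => tens PsiM PsiM
  | 1,0 => tens PsiP XiP  | 1,1 => tens PsiP XiM
  | 1,2 => - tens PsiM XiP | 1,3 => - tens PsiM XiM
  | 2,0 => tens XiP PsiP  | 2,1 => - tens XiP PsiM
  | 2,2 => - tens XiM PsiP | 2,3 => tens XiM PsiM
  | 3,0 => tens XiP XiP   | 3,1 => - tens XiP XiM
  | 3,2 => tens XiM XiP   | 3,3 => - tens XiM XiM
  | _,_ => 0 end.
Definition B (r c : 'I_4) : 'cV[algC]_16 := Bnat r c.

Definition unit_state (psi : 'cV[algC]_16) : Prop :=
  \sum_(i < 16) `|psi i 0| ^+ 2 = 1.
Definition supported_in (R C : {set 'I_4}) (psi : 'cV[algC]_16) : Prop :=
  exists coef : 'I_4 -> 'I_4 -> algC,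
    (forall r c, (r \notin R) || (c \notin C) -> coef r c = 0) /\
    psi = \sum_(r < 4) \sum_(c < 4) coef r c *: B r c.

From mathcomp Require Import all_boot all_order all_algebra all_field.
From mathcomp Require Import zify ring.

(* Expand psi = sum_(r,c) K_rc B_rc.  The basis vector B_rc is supported on the
   cells (l, j) with L_lj = r, where its entry is H_(c, M_lj) / 2 for the 4x4
   Hadamard matrix H.  As L and M are orthogonal Latin squares, P16 permutes the
   coordinates, moving cell (l, j) to (L_lj, M_lj); so P16 psi, read as a 4x4
   matrix, is K H / 2 and Phi_A(|psi><psi|) = K H H^* K^* / 4 = K K^*.  Hence the
   number of nonzero eigenvalues is at most rank K <= min(m, n), K having its
   support in the chosen rows and columns.  Conversely, matching k = min(m, n)
   chosen rows with k chosen columns, each with weight 1/sqrt k, makes K K^*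
   diagonal with exactly k entries 1/k. *)

Set Implicit Arguments.
Unset Strict Implicit.
Unset Printing Implicit Defensive.

Import Order.TTheory GRing.Theory Num.Theory.
Local Open Scope ring_scope.

Section FieldMatrices.
Variable F : fieldType.

Lemma mxrank_sum_le (I : Type) (r : seq I) (P : pred I) m n (A : I -> 'M[F]_(m, n)) :
  (\rank (\sum_(i <- r | P i) A i)%R <= \sum_(i <- r | P i) \rank (A i))%N.
Proof.
elim/big_rec2: _ => [|i k B _ IH]; first by rewrite mxrank0.
exact: leq_trans (mxrank_add _ _) (leq_add (leqnn _) IH).
Qed.

Lemma mxrank_le_card_rows m n (S : {set 'I_m}) (A : 'M[F]_(m, n)) :
  (forall i j, i \notin S -> A i j = 0) -> (\rank A <= #|S|)%N.
Proof.
move=> A0; set d := \row_i (i \in S)%:R : 'rV[F]_m.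
have -> : A = diag_mx d *m A.
  apply/matrixP => i j; rewrite mul_diag_mx !mxE.
  by case: (boolP (i \in S)) => iS; rewrite ?mul1r // mul0r A0.
have -> : diag_mx d = (\sum_(i in S) delta_mx i i)%R.
  rewrite diag_mx_sum_delta [RHS]big_mkcond /=; apply: eq_bigr => i _.
  by rewrite mxE; case: (i \in S); rewrite ?scale1r ?scale0r.
apply: (leq_trans (mxrankM_maxl _ _)); apply: (leq_trans (mxrank_sum_le _ _ _)).
by rewrite -sum1_card; apply: leq_sum => i _; rewrite mxrank_delta.
Qed.

Lemma mxrank_le_card_cols m n (S : {set 'I_n}) (A : 'M[F]_(m, n)) :
  (forall i j, j \notin S -> A i j = 0) -> (\rank A <= #|S|)%N.
Proof.
by move=> A0; rewrite -mxrank_tr; apply: mxrank_le_card_rows => i j /A0; rewrite mxE.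
Qed.

Lemma mup0_char_poly_ge n (A : 'M[F]_n) :
  (n - \rank A <= mup 0 (char_poly A))%N.
Proof.
set r := \rank A; set P := invmx (col_ebase A).
have detP : \det P != 0 by rewrite -unitfE -unitmxE unitmx_inv col_ebase_unit.
have PA : P *m A = pid_mx r *m row_ebase A.
  by rewrite -{1}(mulmx_ebase A) /P -!mulmxA mulKmx ?col_ebase_unit.
(* The rows of index >= r of P (X - A) are X times those of P, as P A = pid_mx r *m _. *)
set d : 'rV[{poly F}]_n := \row_i (if (i < r)%N then 1 else 'X).
set N : 'M[{poly F}]_n := \matrix_(i, j)
  if (i < r)%N then ('X *: map_mx polyC P - map_mx polyC (P *m A)) i j else (P i j)%:P.
have factorX : map_mx polyC P *m char_poly_mx A = diag_mx d *m N.
  have -> : map_mx polyC P *m char_poly_mx A =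
      'X *: map_mx polyC P - map_mx polyC (P *m A).
    by rewrite /char_poly_mx mulmxBr map_mxM mul_mx_scalar.
  rewrite mul_diag_mx.
  apply/matrixP => i j; rewrite !mxE; case: ltnP => ri; first by rewrite mul1r.
  have PAij : (P *m A) i j = 0.
    by rewrite PA mxE big1 // => k _; rewrite !mxE ltnNge ri andbF mul0r.
  by move: PAij; rewrite mxE => ->; rewrite polyC0 subr0.
have detd : \det (diag_mx d) = 'X ^+ (n - r).
  rewrite det_diag; under eq_bigr do rewrite mxE.
  rewrite -(big_mkord xpredT (fun i => if (i < r)%N then 1 else 'X)).
  rewrite (big_cat_nat (leq0n r) (rank_leq_row A)) /= big_nat_cond big1 ?mul1r.
    by rewrite -(prodr_const_nat r n 'X); apply: eq_big_nat => i /andP[/leq_gtF ->].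
  by move=> i /andP[/andP[_ ->]].
have /(congr1 determinant) := factorX.
rewrite !det_mulmx det_map_mx detd => Edet.
rewrite mup_geq ?monic_neq0 ?char_poly_monic // polyC0 subr0.
by rewrite -(dvdpZr _ _ detP) -mul_polyC Edet dvdp_mulIl.
Qed.

End FieldMatrices.

Lemma num_nonzero_eigs_le_rank n (A : 'M[algC]_n) : (num_nonzero_eigs A <= \rank A)%N.
Proof. by rewrite leq_subLR addnC -leq_subLR mup0_char_poly_ge. Qed.

Lemma num_nonzero_eigs_trig n (A : 'M[algC]_n) :
  is_trig_mx A -> num_nonzero_eigs A = #|[pred i | A i i != 0]|.
Proof.
move=> /char_poly_trig cpA; rewrite /num_nonzero_eigs cpA.
rewrite -(big_map (fun i => A i i) xpredT (fun y => 'X - y%:P)) mu_prod_XsubC count_map.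
rewrite -sum1_count sum1_card -[n in (n - _)%N]card_ord -(cardC [pred i | A i i != 0]).
rewrite -[RHS](addnK #|[predC [pred i | A i i != 0]]|); congr (_ - _)%N.
by apply: eq_card => i; rewrite !inE negbK.
Qed.

Lemma adjmxE m n (A : 'M[algC]_(m, n)) i j : adjmx A i j = (A j i)^*.
Proof. by rewrite !mxE. Qed.

Lemma adjmxK m n : cancel (@adjmx m n) (@adjmx n m).
Proof. by move=> A; apply/matrixP => i j; rewrite !adjmxE conjCK. Qed.

Lemma adjmxM m n p (A : 'M[algC]_(m, n)) (B : 'M[algC]_(n, p)) :
  adjmx (A *m B) = adjmx B *m adjmx A.
Proof. by rewrite /adjmx map_mxM trmx_mul. Qed.

Lemma adjmxZ m n (a : algC) (A : 'M[algC]_(m, n)) : adjmx (a *: A) = a^* *: adjmx A.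
Proof. by apply/matrixP => i j; rewrite !(adjmxE, mxE) rmorphM. Qed.

Lemma sum_kronecker (T : finType) (F : T -> algC) (q : T) : \sum_p (p == q)%:R * F p = F q.
Proof. by rewrite (bigD1 q) //= big1 => [|p /negPf->]; rewrite ?eqxx ?mul1r ?addr0 ?mul0r. Qed.

Section IsometricEmbedding.
Variables (k n : nat) (f : 'I_k -> 'I_n).
Hypothesis f_inj : injective f.

Lemma adj_colsub1_mul : adjmx (colsub f 1%:M) *m colsub f 1%:M = 1%:M :> 'M[algC]_k.
Proof.
apply/matrixP => i j; rewrite !mxE (bigD1 (f i)) //= big1 => [|a /negPf ne].
  by rewrite !mxE eqxx conjC1 mul1r addr0 (inj_eq f_inj).
by rewrite !mxE ne conjC0 mul0r.
Qed.

Lemma colsub1_mul_adj :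
  colsub f 1%:M *m adjmx (colsub f 1%:M) = diag_mx (\row_a (a \in codom f)%:R) :> 'M[algC]_n.
Proof.
apply/matrixP => a a'; rewrite !mxE.
case: (boolP (a \in codom f)) => [/codomP[i ->]|notf] /=.
  rewrite (bigD1 i) //= big1 => [|j /negPf ne]; last first.
    by rewrite !mxE (inj_eq f_inj) eq_sym ne mul0r.
  rewrite !mxE !eqxx mul1r addr0 eq_sym.
  by case: (_ == _); rewrite ?conjC1 ?conjC0.
rewrite mul0rn big1 // => i _; rewrite !mxE.
by case: eqP => [Ea|_]; [rewrite Ea codom_f in notf | rewrite mul0r].
Qed.

End IsometricEmbedding.

Lemma idx_val (a b : 'I_4) : idx a b = (4 * a + b)%N :> nat.
Proof. by rewrite inordK //; have := ltn_ord a; have := ltn_ord b; lia. Qed.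

Lemma idx_eq (a b l j : 'I_4) : (idx a b == idx l j) = ((a, b) == (l, j)).
Proof.
rewrite -val_eqE /= !idx_val xpair_eqE -!val_eqE /=.
have := ltn_ord a; have := ltn_ord b; have := ltn_ord l; have := ltn_ord j.
by move: (a : nat) (b : nat) (l : nat) (j : nat) => x y z w *; apply/eqP/andP; lia.
Qed.

Lemma sum_ket_idx (F : 'I_4 -> 'I_4 -> algC) (l j : 'I_4) :
  (\sum_(a < 4) \sum_(b < 4) F a b *: ket a b) (idx l j) 0 = F l j.
Proof.
rewrite summxE; under eq_bigr do rewrite summxE.
rewrite pair_bigA /= -[RHS]/((fun p : 'I_4 * 'I_4 => F p.1 p.2) (l, j)) -sum_kronecker.
by apply: eq_bigr => -[a b] _; rewrite !mxE idx_eq andbT eq_sym mulrC.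
Qed.

Lemma tensE (X Y : 'cV[algC]_4) (l j : 'I_4) :
  tens X Y (idx l j) 0 = X (qket l./2 j./2) 0 * Y (qket (l %% 2) (j %% 2)) 0.
Proof. exact: sum_ket_idx. Qed.

Lemma sum_idx (F : 'I_16 -> algC) :
  \sum_(i < 16) F i = \sum_(p : 'I_4 * 'I_4) F (idx p.1 p.2).
Proof.
have idx_inj : injective (fun p : 'I_4 * 'I_4 => idx p.1 p.2).
  by move=> [a b] [l j] /eqP; rewrite idx_eq => /eqP.
by rewrite (reindex _ (onW_bij _ (inj_card_bij idx_inj _))) // card_prod !card_ord.
Qed.

Definition state_mx (v : 'cV[algC]_16) : 'M[algC]_4 := \matrix_(a, b) v (idx a b) 0.

Lemma ptrace2_proj v : ptrace2 (proj v) = state_mx v *m adjmx (state_mx v).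
Proof.
apply/matrixP => a a'; rewrite !mxE; apply: eq_bigr => b _.
by rewrite mxE big_ord1 !adjmxE !mxE.
Qed.

Lemma trace_ptrace2_proj v : \tr (ptrace2 (proj v)) = \sum_i `|v i 0| ^+ 2.
Proof.
rewrite sum_idx -(pair_bigA _ (fun a b => `|v (idx a b) 0| ^+ 2)); apply: eq_bigr => a _.
rewrite mxE.
by apply: eq_bigr => b _; rewrite mxE big_ord1 adjmxE normCK.
Qed.

Lemma proj_mul (A : 'M[algC]_16) (v : 'cV[algC]_16) : proj (A *m v) = A *m proj v *m adjmx A.
Proof. by rewrite /proj adjmxM !mulmxA. Qed.

Lemma PhiA_proj (v : 'cV[algC]_16) : PhiA (proj v) = ptrace2 (proj (P16 *m v)).
Proof. by rewrite proj_mul. Qed.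

Lemma Lsq_val (l j : 'I_4) : Lsq l j = Lnat l j :> nat.
Proof. by rewrite inordK //; case: l => [[|[|[|[|//]]]] ?]; case: j => [[|[|[|[|//]]]] ?]. Qed.

Lemma Msq_val (l j : 'I_4) : Msq l j = Mnat l j :> nat.
Proof. by rewrite inordK //; case: l => [[|[|[|[|//]]]] ?]; case: j => [[|[|[|[|//]]]] ?]. Qed.

Lemma latin_nat_orthogonal l j l' j' :
  (l < 4)%N -> (j < 4)%N -> (l' < 4)%N -> (j' < 4)%N ->
  Lnat l j = Lnat l' j' -> Mnat l j = Mnat l' j' -> l = l' /\ j = j'.
Proof.
by case: l => [|[|[|[|l]]]] //; case: j => [|[|[|[|j]]]] //;
  case: l' => [|[|[|[|l']]]] //; case: j' => [|[|[|[|j']]]].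
Qed.

Definition latin_pair (p : 'I_4 * 'I_4) : 'I_4 * 'I_4 := (Lsq p.1 p.2, Msq p.1 p.2).

Lemma latin_pair_bij : bijective latin_pair.
Proof.
apply: injF_bij => -[l j] [l' j'] [/(congr1 val) + /(congr1 val)].
rewrite /= !Lsq_val !Msq_val => EL EM.
have [El Ej] := latin_nat_orthogonal (ltn_ord l) (ltn_ord j) (ltn_ord l') (ltn_ord j') EL EM.
by congr pair; apply: val_inj.
Qed.

Lemma ket_mul_adj (a b l j : 'I_4) : ket a b *m adjmx (ket l j) = delta_mx (idx a b) (idx l j).
Proof.
rewrite -(mul_delta_mx (0 : 'I_1)); congr (_ *m _); apply/matrixP => i k.
by rewrite !mxE andbC; case: (_ && _); rewrite ?conjC1 ?conjC0.
Qed.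

Lemma P16_mul_idx (v : 'cV[algC]_16) (l j : 'I_4) :
  (P16 *m v) (idx (Lsq l j) (Msq l j)) 0 = v (idx l j) 0.
Proof.
rewrite /P16 mulmx_suml summxE.
under eq_bigr do rewrite mulmx_suml summxE.
rewrite pair_bigA /= -[RHS]/((fun p : 'I_4 * 'I_4 => v (idx p.1 p.2) 0) (l, j)) -sum_kronecker.
apply: eq_bigr => -[l' j'] _; rewrite ket_mul_adj mxE (bigD1 (idx l' j')) //= big1.
  rewrite !mxE !eqxx idx_eq andbT addr0 eq_sym.
  by rewrite -[(_, _) == _]/(latin_pair (l', j') == latin_pair (l, j)) (bij_eq latin_pair_bij).
by move=> i /negPf ne; rewrite mxE ne andbF mul0r.
Qed.

Lemma sum_sqr_P16 (v : 'cV[algC]_16) : \sum_i `|(P16 *m v) i 0| ^+ 2 = \sum_i `|v i 0| ^+ 2.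
Proof.
rewrite !sum_idx (reindex latin_pair (onW_bij _ latin_pair_bij)) /=.
by apply: eq_bigr => -[l j] _; rewrite P16_mul_idx.
Qed.

Lemma trace_PhiA_proj (v : 'cV[algC]_16) : \tr (PhiA (proj v)) = \sum_i `|v i 0| ^+ 2.
Proof. by rewrite PhiA_proj trace_ptrace2_proj sum_sqr_P16. Qed.

Definition hadamard : 'M[algC]_4 := \matrix_(c, b)
  match nat_of_ord c, nat_of_ord b with
  | 1, 2 | 1, 3 | 2, 1 | 2, 2 | 3, 1 | 3, 3 => -1
  | _, _ => 1
  end.

Lemma isq2_sqr : isq2 * isq2 = 2^-1.
Proof. by rewrite -expr2 exprVn sqrtCK. Qed.

Lemma B_entry (r c l j : 'I_4) :
  B r c (idx l j) 0 = (Lsq l j == r)%:R * (hadamard c (Msq l j) / 2).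
Proof.
rewrite -isq2_sqr.
case: r => [[|[|[|[|//]]]] ?]; case: c => [[|[|[|[|//]]]] ?];
rewrite /B /= ?mxE tensE;
case: l => [[|[|[|[|//]]]] ?]; case: j => [[|[|[|[|//]]]] ?];
rewrite /PsiP /PsiM /XiP /XiM /e4 /qket /Lsq /Msq !mxE -!val_eqE /= !inordK //=; ring.
Qed.

Lemma hadamard_unitary : hadamard *m adjmx hadamard = 4%:M.
Proof.
apply/matrixP => i k; rewrite !mxE !big_ord_recr big_ord0 /= !adjmxE !mxE.
by case: i => [[|[|[|[|//]]]] ?]; case: k => [[|[|[|[|//]]]] ?];
  rewrite /= ?rmorphN1 ?conjC1 ?eqxx; ring.
Qed.

Lemma P16_B (r c a b : 'I_4) :
  (P16 *m B r c) (idx a b) 0 = (a == r)%:R * (hadamard c b / 2).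
Proof.
have [inv _ invK] := latin_pair_bij.
case E : (inv (a, b)) => [l j]; have := invK (a, b); rewrite E => -[<- <-].
by rewrite P16_mul_idx B_entry.
Qed.

Definition coef_mx (coef : 'I_4 -> 'I_4 -> algC) : 'M[algC]_4 := \matrix_(r, c) coef r c.

Lemma state_mx_P16_span coef :
  state_mx (P16 *m \sum_r \sum_c coef r c *: B r c) = 2^-1 *: (coef_mx coef *m hadamard).
Proof.
apply/matrixP => a b; rewrite [LHS]mxE mulmx_sumr summxE !mxE mulr_sumr.
under eq_bigr do rewrite mulmx_sumr summxE.
rewrite -[RHS]/((fun r => \sum_c 2^-1 * (coef_mx coef r c * hadamard c b)) a) -sum_kronecker.
apply: eq_bigr => r _; rewrite eq_sym mulr_sumr; apply: eq_bigr => c _.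
by rewrite -scalemxAr mxE P16_B [coef_mx _ _ _]mxE; ring.
Qed.

Lemma PhiA_proj_span coef :
  PhiA (proj (\sum_r \sum_c coef r c *: B r c)) = coef_mx coef *m adjmx (coef_mx coef).
Proof.
rewrite PhiA_proj ptrace2_proj state_mx_P16_span adjmxZ adjmxM -scalemxAr -scalemxAl.
rewrite scalerA !mulmxA -[_ *m hadamard *m _]mulmxA hadamard_unitary mul_mx_scalar.
rewrite -scalemxAl scalerA fmorphV rmorph_nat.
by rewrite (_ : _ * 4 = 1) ?scale1r //; field.
Qed.

Lemma rank_coef_mx (R C : {set 'I_4}) coef :
  (forall r c, (r \notin R) || (c \notin C) -> coef r c = 0) ->
  (\rank (coef_mx coef) <= minn #|R| #|C|)%N.
Proof.
move=> supp; rewrite leq_min.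
by rewrite mxrank_le_card_rows ?mxrank_le_card_cols // => r c Hrc; rewrite mxE supp ?Hrc ?orbT.
Qed.

Lemma supported_num_nonzero_eigs_le (R C : {set 'I_4}) psi :
  supported_in R C psi -> (num_nonzero_eigs (PhiA (proj psi)) <= minn #|R| #|C|)%N.
Proof.
case=> coef [supp ->]; rewrite PhiA_proj_span.
apply: leq_trans (num_nonzero_eigs_le_rank _) _.
exact: leq_trans (mxrankM_maxl _ _) (rank_coef_mx supp).
Qed.

Section Witness.
Variables R C : {set 'I_4}.
Hypotheses (R0 : (0 < #|R|)%N) (C0 : (0 < #|C|)%N).

Let k := minn #|R| #|C|.
Let f (i : 'I_k) : 'I_4 := enum_val (widen_ord (geq_minl #|R| #|C|) i).
Let g (i : 'I_k) : 'I_4 := enum_val (widen_ord (geq_minr #|R| #|C|) i).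

Let k_gt0 : (0 < k)%N.
Proof. by rewrite leq_min R0 C0. Qed.

Let f_inj : injective f.
Proof. by move=> i j /enum_val_inj [] /val_inj. Qed.
Let g_inj : injective g.
Proof. by move=> i j /enum_val_inj [] /val_inj. Qed.

(* Entry 1 / sqrt k at each (f i, g i), zero elsewhere. *)
Definition witness_mx : 'M[algC]_4 :=
  (sqrtC k%:R)^-1 *: (colsub f 1%:M *m adjmx (colsub g 1%:M)).

Lemma witness_mx_supported r c : (r \notin R) || (c \notin C) -> witness_mx r c = 0.
Proof.
move=> out; rewrite !mxE big1 ?mulr0 // => i _; rewrite !mxE.
case/orP: out => [rR|cC].
  rewrite (_ : r == f i = false) ?mul0r //.
  by apply: contraNF rR => /eqP ->; apply: enum_valP.
rewrite (_ : c == g i = false) ?conjC0 ?mulr0 //.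
by apply: contraNF cC => /eqP ->; apply: enum_valP.
Qed.

Lemma witness_gram :
  witness_mx *m adjmx witness_mx = diag_mx (\row_a ((a \in codom f)%:R / k%:R)).
Proof.
rewrite /witness_mx adjmxZ adjmxM adjmxK -scalemxAr -scalemxAl scalerA.
rewrite !mulmxA -[_ *m colsub g _]mulmxA adj_colsub1_mul // mulmx1.
rewrite colsub1_mul_adj // geC0_conj ?invr_ge0 ?sqrtC_ge0 ?ler0n // -expr2 exprVn sqrtCK.
by apply/matrixP => a a'; rewrite !mxE mulrnAr mulrC.
Qed.

Definition witness_state : 'cV[algC]_16 := \sum_r \sum_c witness_mx r c *: B r c.

Lemma witness_state_supported : supported_in R C witness_state.
Proof. by exists (fun r c => witness_mx r c); split => //; apply: witness_mx_supported. Qed.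

Lemma PhiA_proj_witness :
  PhiA (proj witness_state) = diag_mx (\row_a ((a \in codom f)%:R / k%:R)).
Proof.
rewrite PhiA_proj_span -witness_gram (_ : coef_mx _ = witness_mx) //.
by apply/matrixP => r c; rewrite mxE.
Qed.

Lemma witness_state_unit : unit_state witness_state.
Proof.
rewrite /unit_state -trace_PhiA_proj PhiA_proj_witness mxtrace_diag.
under eq_bigr do rewrite mxE; rewrite -mulr_suml.
have -> : \sum_a (a \in codom f)%:R = #|codom f|%:R :> algC.
  by rewrite -sum1_card natr_sum [RHS]big_mkcond; apply: eq_bigr => a _; case: (_ \in _).
by rewrite card_codom // card_ord mulfV // pnatr_eq0 -lt0n.
Qed.

Lemma witness_state_num_nonzero_eigs : num_nonzero_eigs (PhiA (proj witness_state)) = k.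
Proof.
rewrite PhiA_proj_witness num_nonzero_eigs_trig ?diag_mx_is_trig //.
rewrite -[RHS]card_ord -(card_codom f_inj); apply: eq_card => a; rewrite !inE !mxE eqxx mulr1n.
by case: (_ \in _); rewrite ?mul0r ?eqxx // mul1r invr_eq0 pnatr_eq0 -lt0n k_gt0.
Qed.

End Witness.

Theorem theorem3 (R C : {set 'I_4}) :
  (0 < #|R|)%N -> (0 < #|C|)%N ->
  (forall psi : 'cV[algC]_16, unit_state psi -> supported_in R C psi ->
     (num_nonzero_eigs (PhiA (proj psi)) <= minn #|R| #|C|)%N) /\
  (exists psi : 'cV[algC]_16, unit_state psi /\ supported_in R C psi /\
     num_nonzero_eigs (PhiA (proj psi)) = minn #|R| #|C|).
Proof.
move=> R0 C0; split=> [psi _|]; first exact: supported_num_nonzero_eigs_le.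
exists (witness_state R C); split; first exact: witness_state_unit.
by split; [apply: witness_state_supported | apply: witness_state_num_nonzero_eigs].
Qed.
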